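(* Let $\mathcal{C}(\mathbb{R}) = \{A\subseteq\mathbb{R} : A \text{ is countable or } \mathbb{R}\setminus A \text{ is countable}\}$. Then $\mathcal{C}(\mathbb{R}) \neq \mathcal{B}_f(\mathbb{R})$ for every two-point selection $f$ on $\mathbb{R}$.
   Context: A two-point selection on $\mathbb{R}$ is a function $f$ from the set of two-element subsets of $\mathbb{R}$ to $\mathbb{R}$ with $f(F)\in F$. Write $r<_f s$ if $f(\{r,s\})=r$ ($r\ne s$), $(\leftarrow,r)_f=\{x: x<_f r\}$, $(r,\rightarrow)_f=\{x: r<_f x\}$. The topology $\tau_f$ on $\mathbb{R}$ is generated (as a subbase) by all sets $(\leftarrow,r)_f$, $(r,\rightarrow)_f$, $r\in\mathbb{R}$, and $\mathcal{B}_f(\mathbb{R})$ is the $\sigma$-algebra generated by $\tau_f$. *)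

From Stdlib Require Import Reals List.
Open Scope R_scope.

(* A two-point selection: f {r,s} is encoded as f r s (only values with r <> s
   matter); it must not depend on the order of r,s and must pick r or s. *)
Definition two_point_selection (f : R -> R -> R) : Prop :=
  forall r s : R, r <> s -> f r s = f s r /\ (f r s = r \/ f r s = s).

Definition sel_lt (f : R -> R -> R) (r s : R) : Prop := r <> s /\ f r s = r.

Definition subbase (f : R -> R -> R) (S : R -> Prop) : Prop :=
  exists r : R, S = (fun x => sel_lt f x r) \/ S = (fun x => sel_lt f r x).

(* tau_f: the topology generated by the subbase; U is open iff every point of U
   lies in a finite intersection of subbase sets contained in U (the empty
   intersection being the whole line). *)
Definition tau (f : R -> R -> R) (U : R -> Prop) : Prop :=
  forall x : R, U x ->
    exists l : list (R -> Prop),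
      (forall S, In S l -> subbase f S) /\
      (forall S, In S l -> S x) /\
      (forall y : R, (forall S, In S l -> S y) -> U y).

Definition sigma_algebra (M : (R -> Prop) -> Prop) : Prop :=
  M (fun _ => True) /\
  (forall A, M A -> M (fun x => ~ A x)) /\
  (forall A : nat -> R -> Prop, (forall n, M (A n)) -> M (fun x => exists n, A n x)).

Definition Borel_f (f : R -> R -> R) (A : R -> Prop) : Prop :=
  forall M : (R -> Prop) -> Prop,
    sigma_algebra M -> (forall U, tau f U -> M U) -> M A.

Definition countable_set (A : R -> Prop) : Prop :=
  exists g : R -> nat, forall x y, A x -> A y -> g x = g y -> x = y.

Definition cocountable_family (A : R -> Prop) : Prop :=
  countable_set A \/ countable_set (fun x => ~ A x).

(* If every tau_f-open set were countable or co-countable, then of the two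
   disjoint open rays (r, ->)_f and (<-, r)_f one would be countable for each r;
   by symmetry the set L of points with countable upper ray is uncountable.
   Zorn's lemma gives a maximal family of intervals (s, t)_f, each marked at a
   center a with s, a in L, whose intervals contain no center but their own.
   Maximality makes the centers uncountable: otherwise the intervals and the
   points not below every center form countable sets, leaving room in L for a
   further marked interval.  Splitting the centers into two uncountable halves,
   the union of the intervals around one half is open but neither countable nor
   co-countable. *)

From Stdlib Require Import Reals Lra Lia Classical List.
From mathcomp Require all_boot all_algebra all_classical all_reals all_analysis Rstruct.

Module SetTheoryFacts.
Import all_boot all_algebra all_classical all_reals all_analysis Rstruct.
Import GRing.Theory Num.Theory.
Local Open Scope classical_set_scope.
Local Open Scope ring_scope.

Lemma countable_setE (A : R -> Prop) : countable_set A <-> countable A.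
Proof.
split=> [[g injg]|/countable_injP[g injg]].
  by apply/countable_injP; exists g => x y; rewrite !inE; apply: injg.
by exists g => x y Ax Ay; apply: injg; rewrite inE.
Qed.

Lemma not_countable_setT : ~ countable_set (fun _ : R => True).
Proof.
move=> /countable_setE cT.
have c01 : countable ([set` `[0, 1]%R] : set R) by apply: sub_countable cT; exact: subset_card_le.
have := countable_lebesgue_measure0 c01.
by rewrite lebesgue_measure_itv /= lte_fin ltr01 oppr0 adde0 => /eqP; rewrite eqe oner_eq0.
Qed.

Lemma countable_set_bigcup (D : R -> Prop) (F : R -> R -> Prop) :
  countable_set D -> (forall i, D i -> countable_set (F i)) ->
  countable_set (fun x => exists i, D i /\ F i x).
Proof.
move=> /countable_setE cD cF; apply/countable_setE.
apply: sub_countable (bigcup_countable cD (fun i Di => proj1 (countable_setE _) (cF i Di))).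
by apply: subset_card_le => x [i [Di Fix]]; exists i.
Qed.

Lemma countable_set_bigcup_nat (F : nat -> R -> Prop) :
  (forall n, countable_set (F n)) -> countable_set (fun x => exists n, F n x).
Proof.
move=> cF; apply/countable_setE.
apply: sub_countable (@bigcup_countable _ _ setT F (countableP _) (fun n _ => proj1 (countable_setE _) (cF n))).
by apply: subset_card_le => x [n Fnx]; exists n.
Qed.

Lemma zorn_chain_union (T : Type) (P : (T -> Prop) -> Prop) :
  (forall F : (T -> Prop) -> Prop, (forall X, F X -> P X) ->
     (forall X Y, F X -> F Y -> (forall x, X x -> Y x) \/ (forall x, Y x -> X x)) ->
     P (fun x => exists X, F X /\ X x)) ->
  exists A, P A /\
    forall B, (forall x, A x -> B x) -> ~ (forall x, B x -> A x) -> ~ P B.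
Proof.
move=> Pchain; have [F FP Ftot|A [PA Amax]] := @Zorn_bigcup T P.
  have -> : \bigcup_(X in F) X = (fun x => exists X, F X /\ X x).
    by apply/funext => x; apply/propext; split=> [[X]|[X []]]; exists X.
  exact: Pchain.
by exists A; split=> // B AB BA; apply: Amax; split.
Qed.

End SetTheoryFacts.
Import SetTheoryFacts.

Lemma countable_set_sub (A B : R -> Prop) :
  (forall x, A x -> B x) -> countable_set B -> countable_set A.
Proof. intros AB [g Hg]. exists g. intros x y Ax Ay. apply Hg; auto. Qed.

Lemma countable_set_union (A B : R -> Prop) :
  countable_set A -> countable_set B -> countable_set (fun x => A x \/ B x).
Proof.
  intros HA HB.
  apply (countable_set_sub _
           (fun x => exists n, (fun n x => match n with O => A x | S _ => B x end) n x)).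
  - intros x [Ax|Bx]; [exists O|exists 1%nat]; assumption.
  - apply countable_set_bigcup_nat. intros [|n]; assumption.
Qed.

Lemma countable_set_singleton (c : R) : countable_set (fun x => x = c).
Proof. exists (fun _ => O). intros x y -> -> _. reflexivity. Qed.

Lemma countable_set_of_lower_parts (A : R -> Prop) :
  (forall M, countable_set (fun y => A y /\ y < M)) -> countable_set A.
Proof.
  intro HA. apply (countable_set_sub _ (fun y => exists n, A y /\ y < INR n)).
  - intros y Ay. destruct (INR_unbounded y) as [n Hn]. exists n. split; [assumption|lra].
  - apply countable_set_bigcup_nat. intro n. apply HA.
Qed.

Lemma countable_set_of_upper_parts (A : R -> Prop) :
  (forall m, countable_set (fun y => A y /\ m < y)) -> countable_set A.
Proof.
  intro HA. apply (countable_set_sub _ (fun y => exists n, A y /\ - INR n < y)).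
  - intros y Ay. destruct (INR_unbounded (- y)) as [n Hn]. exists n. split; [assumption|lra].
  - apply countable_set_bigcup_nat. intro n. apply HA.
Qed.

Lemma countable_set_of_punctured (A : R -> Prop) (c : R) :
  (forall eps, 0 < eps -> countable_set (fun y => A y /\ (y < c - eps \/ c + eps < y))) ->
  countable_set A.
Proof.
  intro HA.
  apply (countable_set_sub _ (fun y => (exists k, A y /\
           (y < c - / INR (S k) \/ c + / INR (S k) < y)) \/ y = c)).
  - intros y Ay. destruct (Req_dec y c) as [->|Hyc]; [right; reflexivity|left].
    destruct (archimed_cor1 (Rabs (y - c))) as [[|k] [Hk Hpos]];
      [apply Rabs_pos_lt; lra|lia|].
    exists k. split; [assumption|].
    revert Hk. unfold Rabs. destruct (Rcase_abs (y - c)); lra.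
  - apply countable_set_union; [|apply countable_set_singleton].
    apply countable_set_bigcup_nat. intro k. apply HA.
    apply Rinv_0_lt_compat, lt_0_INR. lia.
Qed.

Lemma uncountable_set_split (A : R -> Prop) : ~ countable_set A ->
  exists A1, (forall x, A1 x -> A x) /\ ~ countable_set A1 /\
             ~ countable_set (fun x => A x /\ ~ A1 x).
Proof.
  intro HA. apply NNPP. intro Hno.
  set (below := fun x => countable_set (fun y => A y /\ y < x)).
  set (above := fun x => countable_set (fun y => A y /\ x < y)).
  assert (Hdich : forall x, below x \/ above x).
  { intro x. apply NNPP. intros [Hb Ha]%not_or_and. apply Hno.
    exists (fun y => A y /\ y < x). split; [tauto|split; [exact Hb|]].
    intro Hrest. apply Ha. refine (countable_set_sub _ _ _ Hrest).
    intros y [Ay Hxy]. split; [exact Ay|]. intros [_ Hyx]. lra. }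
  assert (below_mono : forall x x', x' <= x -> below x -> below x').
  { intros x x' Hle Hx. refine (countable_set_sub _ _ _ Hx).
    intros y [Ay Hy]. split; [exact Ay|lra]. }
  destruct (classic (forall M, below M)) as [Hall|[M HM]%not_all_ex_not].
  { exact (HA (countable_set_of_lower_parts A Hall)). }
  destruct (classic (forall m, above m)) as [Hall|[m Hm]%not_all_ex_not].
  { exact (HA (countable_set_of_upper_parts A Hall)). }
  assert (Hbound : bound below).
  { exists M. intros x Hx. apply Rnot_lt_le. intro HMx.
    apply HM, (below_mono x); [lra|exact Hx]. }
  assert (Hne : exists x, below x).
  { exists m. destruct (Hdich m); [assumption|contradiction]. }
  (* [A] is countable away from every neighbourhood of [c = sup below]. *)
  destruct (completeness below Hbound Hne) as [c [Hub Hlub]].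
  apply HA, (countable_set_of_punctured A c). intros eps Heps.
  assert (Hlow : below (c - eps)).
  { apply NNPP. intro Hn. enough (c <= c - eps) by lra.
    apply Hlub. intros x Hx. apply Rnot_lt_le. intro Hlt.
    apply Hn, (below_mono x); [lra|exact Hx]. }
  assert (Hhigh : above (c + eps)).
  { destruct (Hdich (c + eps)) as [Hb|Ha]; [|exact Ha].
    enough (c + eps <= c) by lra. apply Hub, Hb. }
  refine (countable_set_sub _ _ _ (countable_set_union _ _ Hlow Hhigh)).
  intros y [Ay [Hy|Hy]]; [left|right]; split; assumption.
Qed.

Section Tournament.

Variable lt : R -> R -> Prop.
Hypothesis lt_asym : forall x y, lt x y -> ~ lt y x.
Hypothesis lt_total : forall x y, x <> y -> lt x y \/ lt y x.

Definition interval_open (V : R -> Prop) : Prop :=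
  forall x, V x -> exists s t, lt s x /\ lt x t /\ (forall y, lt s y -> lt y t -> V y).

Hypothesis interval_open_dichotomy :
  forall V, interval_open V -> countable_set V \/ countable_set (fun x => ~ V x).

Definition thin (r : R) : Prop := countable_set (fun x => lt r x).

Lemma thin_not_below (b : R) : thin b -> countable_set (fun x => ~ lt x b).
Proof.
  intro Hb. apply (countable_set_sub _ (fun x => lt b x \/ x = b)).
  - intros x Hx. destruct (Req_dec x b) as [->|Hne]; [right; reflexivity|left].
    destruct (lt_total x b Hne); tauto.
  - apply countable_set_union; [exact Hb|apply countable_set_singleton].
Qed.

Record marked_interval := Marked { center : R; left_end : R; right_end : R }.

Definition inside (p : marked_interval) (x : R) : Prop :=
  lt (left_end p) x /\ lt x (right_end p).

Definition admissible (p : marked_interval) : Prop :=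
  thin (left_end p) /\ thin (center p) /\ inside p (center p).

Definition isolating (F : marked_interval -> Prop) : Prop :=
  (forall p, F p -> admissible p) /\
  (forall p q, F p -> F q -> inside p (center q) -> p = q).

Lemma exists_maximal_isolating : exists F, isolating F /\
  forall G, (forall p, F p -> G p) -> ~ (forall p, G p -> F p) -> ~ isolating G.
Proof.
  apply zorn_chain_union. intros Fam Hiso Hchain. split.
  - intros p [X [FX Xp]]. exact (proj1 (Hiso X FX) p Xp).
  - intros p q [X [FX Xp]] [Y [FY Yq]] Hin.
    destruct (Hchain X Y FX FY) as [XY|YX].
    + exact (proj2 (Hiso Y FY) p q (XY p Xp) Yq Hin).
    + exact (proj2 (Hiso X FX) p q Xp (YX q Yq) Hin).
Qed.

Lemma isolating_extend (F : marked_interval -> Prop) (p0 : marked_interval) :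
  isolating F -> admissible p0 ->
  (forall p, F p -> ~ inside p (center p0)) ->
  (forall q, F q -> ~ inside p0 (center q)) ->
  isolating (fun p => F p \/ p = p0).
Proof.
  intros [Fadm Fsep] Hp0 Hout Hin. split.
  - intros p [Fp| ->]; auto.
  - intros p q [Fp| ->] [Fq| ->] Hpq.
    + exact (Fsep p q Fp Fq Hpq).
    + contradiction (Hout p Fp).
    + contradiction (Hin q Fq).
    + reflexivity.
Qed.

Section ThinUncountable.

Hypothesis thin_uncountable : ~ countable_set thin.

Lemma thin_escapes (B : R -> Prop) : countable_set B -> exists x, thin x /\ ~ B x.
Proof.
  intro HB. apply NNPP. intro Hno. apply thin_uncountable.
  apply (countable_set_sub _ B); [|exact HB].
  intros x Hx. apply NNPP. intro HBx. apply Hno. exists x. split; assumption.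
Qed.

Section Maximal.

Variable F : marked_interval -> Prop.
Hypothesis F_isolating : isolating F.
Hypothesis F_maximal :
  forall G, (forall p, F p -> G p) -> ~ (forall p, G p -> F p) -> ~ isolating G.

Definition centers (x : R) : Prop := exists p, F p /\ center p = x.

Definition covered (x : R) : Prop := exists p, F p /\ inside p x.

Lemma center_inj (p q : marked_interval) : F p -> F q -> center p = center q -> p = q.
Proof.
  intros Fp Fq Hpq. apply (proj2 F_isolating p q Fp Fq).
  rewrite <- Hpq. apply (proj1 F_isolating p Fp).
Qed.

Lemma countable_covered : countable_set centers -> countable_set covered.
Proof.
  intro Hc.
  apply (countable_set_sub _ (fun x => exists a, centers a /\
           (fun a x => exists p, F p /\ center p = a /\ lt (left_end p) x) a x)).
  - intros x [p [Fp [Hl _]]]. exists (center p). split; exists p; auto.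
  - apply countable_set_bigcup; [exact Hc|]. intros a [p [Fp <-]].
    apply (countable_set_sub _ (fun x => lt (left_end p) x)).
    + intros x [q [Fq [Hqp Hq]]]. rewrite <- (center_inj q p Fq Fp Hqp). exact Hq.
    + exact (proj1 (proj1 F_isolating p Fp)).
Qed.

Lemma countable_not_below_centers :
  countable_set centers -> countable_set (fun x => exists b, centers b /\ ~ lt x b).
Proof.
  intro Hc. apply countable_set_bigcup; [exact Hc|].
  intros b [p [Fp <-]]. apply thin_not_below, (proj1 F_isolating p Fp).
Qed.

(* Were the centers countable, a thin [t] below all of them, a thin [a < t]
   outside every interval and a thin [s < a] would exist, and [(s, t)] marked
   at [a] would extend [F]. *)
Lemma centers_uncountable : ~ countable_set centers.
Proof.
  intro Hc.
  destruct (thin_escapes _ (countable_not_below_centers Hc)) as [t [Ht Hnb]].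
  assert (Hlt : forall b, centers b -> lt t b).
  { intros b Hb. apply NNPP. intro Hn. apply Hnb. exists b. split; assumption. }
  destruct (thin_escapes (fun x => ~ lt x t \/ covered x)) as [a [Ha Hnot]].
  { apply countable_set_union; [exact (thin_not_below t Ht)|exact (countable_covered Hc)]. }
  apply not_or_and in Hnot. destruct Hnot as [Hat Hacov]. apply NNPP in Hat.
  destruct (thin_escapes _ (thin_not_below a Ha)) as [s [Hs Hsa]]. apply NNPP in Hsa.
  set (p0 := Marked a s t).
  apply (F_maximal (fun p => F p \/ p = p0)).
  - intros p Fp. left. exact Fp.
  - intro Hsub. apply Hacov. exists p0. split; [apply Hsub; right; reflexivity|split; assumption].
  - apply isolating_extend; [exact F_isolating| | |].
    + repeat split; assumption.
    + intros p Fp Hin. apply Hacov. exists p. split; assumption.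
    + intros q Fq [_ Hqt]. apply (lt_asym _ _ Hqt), Hlt. exists q. split; [assumption|reflexivity].
Qed.

(* The union of the intervals marked at centers in [A1] meets the centers exactly in [A1]. *)
Lemma maximal_isolating_absurd : False.
Proof.
  destruct (uncountable_set_split centers centers_uncountable)
    as [A1 [HA1 [HA1unc Hrestunc]]].
  set (V := fun x => exists p, F p /\ A1 (center p) /\ inside p x).
  destruct (interval_open_dichotomy V) as [HV|HV].
  - intros x [p [Fp [Hp [Hs Ht]]]]. exists (left_end p), (right_end p).
    split; [assumption|split; [assumption|]].
    intros y Hsy Hyt. exists p. repeat split; assumption.
  - apply HA1unc. apply (countable_set_sub _ V); [|exact HV].
    intros x Hx. destruct (HA1 x Hx) as [p [Fp <-]].
    exists p. repeat split; try assumption; apply (proj1 F_isolating p Fp).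
  - apply Hrestunc. apply (countable_set_sub _ (fun x => ~ V x)); [|exact HV].
    intros x [[q [Fq <-]] Hq] [p [Fp [Hp Hin]]].
    apply Hq. rewrite <- (proj2 F_isolating p q Fp Fq Hin). exact Hp.
Qed.

End Maximal.

Lemma thin_uncountable_absurd : False.
Proof.
  destruct exists_maximal_isolating as [F [HF Hmax]].
  exact (maximal_isolating_absurd F HF Hmax).
Qed.

End ThinUncountable.

Lemma countable_thin : countable_set thin.
Proof. apply NNPP. exact thin_uncountable_absurd. Qed.

End Tournament.

Lemma interval_open_flip (lt : R -> R -> Prop) (V : R -> Prop) :
  interval_open (fun x y => lt y x) V -> interval_open lt V.
Proof.
  intros HV x Vx. destruct (HV x Vx) as [s [t [Hxs [Htx HVst]]]].
  exists t, s. split; [exact Htx|split; [exact Hxs|]].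
  intros y Hty Hys. exact (HVst y Hys Hty).
Qed.

Section Selection.

Variable f : R -> R -> R.
Hypothesis f_selection : two_point_selection f.

Lemma sel_lt_asym (x y : R) : sel_lt f x y -> ~ sel_lt f y x.
Proof.
  intros [Hxy Hx] [_ Hy]. apply Hxy.
  destruct (f_selection x y Hxy) as [Hsym _]. congruence.
Qed.

Lemma sel_lt_total (x y : R) : x <> y -> sel_lt f x y \/ sel_lt f y x.
Proof.
  intro Hxy. destruct (f_selection x y Hxy) as [Hsym [Hx|Hy]].
  - left. split; assumption.
  - right. split; congruence.
Qed.

Lemma tau_subbase (S : R -> Prop) : subbase f S -> tau f S.
Proof.
  intros HS x Sx. exists (S :: nil). split; [|split].
  - intros S' [<-|[]]. exact HS.
  - intros S' [<-|[]]. exact Sx.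
  - intros y Hy. apply Hy. left. reflexivity.
Qed.

Lemma tau_interval_open (V : R -> Prop) : interval_open (sel_lt f) V -> tau f V.
Proof.
  intros HV x Vx. destruct (HV x Vx) as [s [t [Hsx [Hxt HVst]]]].
  exists ((fun y => sel_lt f s y) :: (fun y => sel_lt f y t) :: nil). split; [|split].
  - intros S [<-|[<-|[]]]; [exists s; right|exists t; left]; reflexivity.
  - intros S [<-|[<-|[]]]; assumption.
  - intros y Hy. apply HVst; apply Hy; simpl; auto.
Qed.

Lemma tau_open_not_all_cocountable : ~ (forall U, tau f U -> cocountable_family U).
Proof.
  intro Hco.
  assert (Hdich : forall V, interval_open (sel_lt f) V ->
                    countable_set V \/ countable_set (fun x => ~ V x)).
  { intros V HV. apply Hco, tau_interval_open, HV. }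
  assert (Hrays : forall r, thin (sel_lt f) r \/ thin (fun x y => sel_lt f y x) r).
  { intro r. assert (Hopen : tau f (fun x => sel_lt f r x)).
    { apply tau_subbase. exists r. right. reflexivity. }
    destruct (Hco _ Hopen) as [Hup|Hnotup]; [left; exact Hup|right].
    refine (countable_set_sub _ _ _ Hnotup). intros x Hxr Hrx. exact (sel_lt_asym _ _ Hxr Hrx). }
  apply not_countable_setT.
  apply (countable_set_sub _ _ (fun r _ => Hrays r)).
  apply countable_set_union; apply countable_thin.
  - exact sel_lt_asym.
  - exact sel_lt_total.
  - exact Hdich.
  - intros x y Hyx Hxy. exact (sel_lt_asym _ _ Hxy Hyx).
  - intros x y Hxy. destruct (sel_lt_total x y Hxy); [right|left]; assumption.
  - intros V HV. apply Hdich, interval_open_flip, HV.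
Qed.

End Selection.

Theorem theorem3p8 :
  forall f : R -> R -> R, two_point_selection f ->
    ~ (forall A : R -> Prop, cocountable_family A <-> Borel_f f A).
Proof.
  intros f Hf Heq. apply (tau_open_not_all_cocountable f Hf).
  intros U HU. apply Heq. intros M _ HM. exact (HM U HU).
Qed.
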